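(* Let $\Gamma$ be a highly-regular graph with $3\le\operatorname{diam}(\Gamma)<\infty$. Then the complement $\overline{\Gamma}$ is a highly-regular graph with $\operatorname{diam}(\overline{\Gamma})=2$ which is not distance-regular.
   Context: All graphs are finite, undirected, without loops or multiple edges; the diameter of a disconnected graph is $\infty$. $\overline{\Gamma}$ has vertex set $V(\Gamma)$ and edges exactly the pairs of distinct vertices not adjacent in $\Gamma$. A graph $\Gamma$ of order $n$ is highly-regular with collapsed adjacency matrix (CAM) $C=[c_{i,j}]_{1\le i,j\le m}$, where $2\le m<n$ (the value $m=n$ is allowed only when $n=2$), if for every vertex $u$ there is a partition of $V(\Gamma)$ into nonempty sets $V_1(u)=\{u\},V_2(u),\dots,V_m(u)$ such that for all $i,j$, every vertex $y\in V_j(u)$ is adjacent to exactly $c_{i,j}$ vertices of $V_i(u)$. A connected graph $\Gamma$ is distance-regular if for all $u,v$ the numbers $|D_1(v)\cap D_{i-1}(u)|$, $|D_1(v)\cap D_i(u)|$, $|D_1(v)\cap D_{i+1}(u)|$ depend only on $i=d(u,v)$, where $D_i(u)=\{v:d(u,v)=i\}$. *)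

From mathcomp Require Import all_boot.
Set Implicit Arguments. Unset Strict Implicit. Unset Printing Implicit Defensive.

Section Graphs.
Variable T : finType.

Definition simple_graph (e : rel T) : Prop := symmetric e /\ irreflexive e.

Definition compl_graph (e : rel T) : rel T := fun x y => (x != y) && ~~ e x y.

Fixpoint ball (e : rel T) (k : nat) (u : T) : {set T} :=
  if k is k'.+1 then
    ball e k' u :|: [set y | [exists x in ball e k' u, e x y]]
  else [set u].

Definition sphere (e : rel T) (i : nat) (u : T) : {set T} :=
  if i is i'.+1 then ball e i'.+1 u :\: ball e i' u else [set u].

Definition connected_graph (e : rel T) : Prop := forall u v, exists k, v \in ball e k u.

Definition has_diam (e : rel T) (d : nat) : Prop :=
  (forall u v, v \in ball e d u) /\ exists u v, v \in sphere e d u.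

Definition highly_regular (e : rel T) : Prop :=
  exists (m : nat) (C : 'I_m -> 'I_m -> nat),
    ((2 <= m < #|T|) || ((m == #|T|) && (#|T| == 2))) /\
    forall u : T, exists f : T -> 'I_m,
      (* class of index 0 (i.e. V_1(u)) is exactly {u} *)
      (forall y, (nat_of_ord (f y) == 0) = (y == u)) /\
      (forall i : 'I_m, exists y, f y = i) /\
      (forall (i j : 'I_m) (y : T), f y = j ->
          #|[set x | e x y & f x == i]| = C i j).

Definition distance_regular (e : rel T) : Prop :=
  connected_graph e /\
  forall (i : nat) (u v u' v' : T),
    v \in sphere e i u -> v' \in sphere e i u' ->
      [/\ #|sphere e 1 v :&: sphere e i.-1 u| = #|sphere e 1 v' :&: sphere e i.-1 u'|,
          #|sphere e 1 v :&: sphere e i u| = #|sphere e 1 v' :&: sphere e i u'|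
        & #|sphere e 1 v :&: sphere e i.+1 u| = #|sphere e 1 v' :&: sphere e i.+1 u'|].

End Graphs.

From mathcomp Require Import all_boot.
Set Implicit Arguments. Unset Strict Implicit. Unset Printing Implicit Defensive.

(* A CAM partition of V around u is a coarsening of the distance partition:
   with i ~ j whenever c_{i,j} > 0, the ball of radius k around u is the union
   of the classes within k steps of the class {u}. Hence all vertices have the
   same distance profile, and double counting edges between V_i(u) and V_j(u)
   gives |V_j(u)| c_{i,j} = |V_i(u)| c_{j,i}, so in a connected graph the class
   sizes do not depend on u. A vertex of V_j(u) then has
   |V_i| - [i = j] - c_{i,j} non-neighbours in V_i(u), a CAM for the complement.
   Since every vertex has some vertex at distance >= 3, any two adjacent
   vertices have a common neighbour in the complement, whose diameter is thus 2,
   and its second sphere around u is the Gamma-neighbourhood of u. If d(u,b) = 2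
   (through a) and d(u,v) >= 3, then b and v are complement-neighbours of u, but
   v is complement-adjacent to all of N(u) whereas b misses a. *)

Section Balls.
Variables (T : finType) (r : rel T).

Lemma in_ball0 u y : (y \in ball r 0 u) = (y == u).
Proof. by rewrite inE. Qed.

Lemma in_ballS k u y :
  (y \in ball r k.+1 u) = (y \in ball r k u) || [exists x in ball r k u, r x y].
Proof. by rewrite /= in_setU inE. Qed.

Lemma in_ball1 u y : (y \in ball r 1 u) = (y == u) || r u y.
Proof.
rewrite in_ballS in_ball0; congr (_ || _).
apply/existsP/idP => [[x /andP[]]|ruy]; first by rewrite in_ball0 => /eqP ->.
by exists u; rewrite in_ball0 eqxx.
Qed.

Lemma subset_ballS k u : ball r k u \subset ball r k.+1 u.
Proof. exact: subsetUl. Qed.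

Lemma subset_ball k l u : k <= l -> ball r k u \subset ball r l u.
Proof.
move=> le_kl; rewrite -(subnKC le_kl); elim: (l - k) => [|n IHn].
  by rewrite addn0.
by apply: subset_trans IHn _; rewrite addnS subset_ballS.
Qed.

Lemma ball_stable k u n :
  ball r k.+1 u = ball r k u -> ball r (k + n) u = ball r k u.
Proof.
move=> Sk; elim: n => [|n IHn]; first by rewrite addn0.
by rewrite addnS -[in RHS]Sk /= IHn.
Qed.

Lemma notin_ball_sphere d k u v :
  k <= d -> v \in sphere r d.+1 u -> v \notin ball r k u.
Proof.
move=> le_kd; rewrite in_setD => /andP[vNd _].
by apply: contra vNd; apply/subsetP/subset_ball.
Qed.

Lemma dist2_path k u v : v \in ball r k u -> v \notin ball r 2 u ->
  exists a b, [/\ r u a, r a b, b != u & ~~ r u b].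
Proof.
move=> vNk vN2.
have /subsetPn[b b2 bN1] : ~~ (ball r 2 u \subset ball r 1 u).
  apply: contra vN2 => sub21.
  have /(ball_stable k) : ball r 2 u = ball r 1 u.
    by apply/eqP; rewrite eqEsubset sub21 subset_ballS.
  rewrite add1n => Sk; apply: (subsetP (subset_ballS _ _)).
  by rewrite -Sk (subsetP (subset_ballS _ _)).
move: bN1; rewrite in_ball1 negb_or => /andP[bNu ruNb].
move: b2; rewrite in_ballS in_ball1 (negbTE bNu) (negbTE ruNb) /=.
case/existsP=> a /andP[]; rewrite in_ball1 => /orP[/eqP-> rub|rua rab].
  by rewrite rub in ruNb.
by exists a, b.
Qed.

End Balls.

Lemma card_set_sum (T : finType) (P Q : pred T) :
  #|[set x | P x && Q x]| = \sum_(x | Q x) P x.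
Proof.
rewrite -sum1_card big_mkcond [RHS]big_mkcond; apply: eq_bigr => x _.
by rewrite inE; case: (P x); case: (Q x).
Qed.

Section CollapsedAdjacency.
Variables (T : finType) (e : rel T) (m : nat) (C : 'I_m -> 'I_m -> nat).

Definition cam_partition (u : T) (f : T -> 'I_m) :=
  (forall y, (nat_of_ord (f y) == 0) = (y == u)) /\
  (forall i : 'I_m, exists y, f y = i) /\
  (forall (i j : 'I_m) (y : T), f y = j -> #|[set x | e x y & f x == i]| = C i j).

Definition cam_graph : rel 'I_m := fun i j => 0 < C i j.

Definition class_card (f : T -> 'I_m) (i : 'I_m) := #|[set x | f x == i]|.

Lemma cam_partition_root_eq u f :
  cam_partition u f -> forall x, (f x == f u) = (x == u).
Proof.
case=> f0 _ x; have fu0 : nat_of_ord (f u) = 0 by apply/eqP; rewrite f0.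
by rewrite -val_eqE /= fu0 f0.
Qed.

Lemma cam_partition_root u u' f f' :
  cam_partition u f -> cam_partition u' f' -> f u = f' u'.
Proof.
case=> f0 _ [f'0 _]; apply: val_inj => /=.
by have := f0 u; have := f'0 u'; rewrite !eqxx => /eqP-> /eqP->.
Qed.

Lemma class_card_root u f : cam_partition u f -> class_card f (f u) = 1.
Proof.
move=> fP; rewrite /class_card -(cards1 u); apply: eq_card => x.
by rewrite !inE (cam_partition_root_eq fP).
Qed.

Lemma in_ball_cam u f : cam_partition u f ->
  forall k y, (y \in ball e k u) = (f y \in ball cam_graph k (f u)).
Proof.
move=> fP; have [_ [_ fC]] := fP.
elim=> [|k IHk] y; first by rewrite !in_ball0 (cam_partition_root_eq fP).
rewrite !in_ballS IHk; congr (_ || _).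
apply/existsP/existsP => [[x /andP[xk exy]]|[i /andP[ik]]].
  exists (f x); rewrite -IHk xk /cam_graph -(fC (f x) (f y) y erefl).
  by apply/card_gt0P; exists x; rewrite inE exy eqxx.
rewrite /cam_graph -(fC i (f y) y erefl) => /card_gt0P[x].
by rewrite inE => /andP[exy /eqP fxi]; exists x; rewrite IHk fxi ik exy.
Qed.

Lemma cam_partition_far k u u' f f' :
  cam_partition u f -> cam_partition u' f' ->
  (exists w, w \notin ball e k u') -> exists w, w \notin ball e k u.
Proof.
move=> fP f'P [w' w'N]; have [_ [f_onto _]] := fP.
have [w fw] := f_onto (f' w'); exists w.
by rewrite (in_ball_cam fP) fw (cam_partition_root fP f'P) -(in_ball_cam f'P).
Qed.

Lemma class_card_cam_edges u f : cam_partition u f -> forall k l,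
  class_card f l * C k l = \sum_(y | f y == l) \sum_(x | f x == k) e x y.
Proof.
case=> _ [_ fC] k l; rewrite /class_card -sum1dep_card big_distrl /=.
by apply: eq_bigr => y /eqP fy; rewrite mul1n -(fC k l y fy) card_set_sum.
Qed.

Lemma class_card_cam_balance u f : symmetric e -> cam_partition u f ->
  forall i j, class_card f j * C i j = class_card f i * C j i.
Proof.
move=> esym fP i j; rewrite !(class_card_cam_edges fP) exchange_big /=.
by apply: eq_bigr => x _; apply: eq_bigr => y _; rewrite esym.
Qed.

Lemma class_card_indep u u' f f' : symmetric e ->
  cam_partition u f -> cam_partition u' f' ->
  (forall y, exists k, y \in ball e k u) -> forall i, class_card f i = class_card f' i.
Proof.
move=> esym fP f'P u_conn.
have in_ball_eq k i : i \in ball cam_graph k (f u) -> class_card f i = class_card f' i.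
  elim: k i => [|k IHk] i.
    rewrite in_ball0 => /eqP->.
    by rewrite (class_card_root fP) (cam_partition_root fP f'P) (class_card_root f'P).
  rewrite in_ballS => /orP[/IHk //|/existsP[l /andP[lk Cli_gt0]]].
  apply/eqP; rewrite -(eqn_pmul2r Cli_gt0) (class_card_cam_balance esym fP).
  by rewrite (class_card_cam_balance esym f'P) (IHk l lk).
move=> i; have [_ [f_onto _]] := fP; have [y <-] := f_onto i.
by have [k yk] := u_conn y; apply: (in_ball_eq k); rewrite -(in_ball_cam fP).
Qed.

Lemma compl_cam_count u f : irreflexive e -> cam_partition u f ->
  forall i j y, f y = j ->
  #|[set x | compl_graph e x y & f x == i]| = class_card f i - (i == j) - C i j.
Proof.
move=> eirr fP i j y fy; have [_ [_ fC]] := fP.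
have split1 x : 1 = compl_graph e x y + ((x == y) + e x y).
  rewrite /compl_graph; case: (eqVneq x y) => [->|] /=; first by rewrite eirr.
  by case: (e x y).
have diag : \sum_(x | f x == i) (x == y) = (i == j).
  rewrite -card_set_sum -fy; case: (eqVneq (f y) i) => [<-|fyNi] /=.
    by rewrite -(cards1 y); apply: eq_card => x; rewrite !inE andb_idr // => /eqP->.
  apply/eqP; rewrite cards_eq0; apply/eqP/setP => x; rewrite !inE.
  by case: eqP => // ->; rewrite (negbTE fyNi).
rewrite /class_card -[#|[set x | f x == i]|]sum1dep_card.
rewrite (eq_bigr _ (fun x _ => split1 x)) !big_split /= diag.
have -> : \sum_(x | f x == i) e x y = C i j.
  by rewrite -(fC i j y fy) card_set_sum.
by rewrite -subnDA addnK card_set_sum.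
Qed.

End CollapsedAdjacency.

Lemma highly_regular_far (T : finType) (e : rel T) k u0 v0 :
  highly_regular e -> v0 \notin ball e k u0 -> forall u, exists w, w \notin ball e k u.
Proof.
move=> [m [C [_ HC]]] v0N u.
have [f fP] := HC u; have [f0 f0P] := HC u0.
exact: cam_partition_far fP f0P (ex_intro _ v0 v0N).
Qed.

Lemma highly_regular_compl (T : finType) (e : rel T) :
  simple_graph e -> connected_graph e -> highly_regular e ->
  highly_regular (compl_graph e).
Proof.
move=> [esym eirr] conn [m [C [hm HC]]].
have /card_gt0P[u0 _] : 0 < #|T|.
  by case/orP: hm => [/andP[_]|/andP[_ /eqP->]] //; apply: leq_ltn_trans.
have [f0 f0P] := HC u0.
exists m, (fun i j => class_card f0 i - (i == j) - C i j); split=> // u.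
have [f fP] := HC u; exists f; have [f_root [f_onto _]] := fP.
do 2!split=> //; move=> i j y fy.
by rewrite (compl_cam_count eirr fP _ fy) (class_card_indep esym fP f0P (conn u)).
Qed.

Section Complement.
Variables (T : finType) (e : rel T).
Hypotheses (esym : symmetric e) (eirr : irreflexive e).
Hypothesis far : forall u, exists w, w \notin ball e 2 u.
Local Notation ce := (compl_graph e).

Lemma compl_graph_sym : symmetric ce.
Proof. by move=> x y; rewrite /compl_graph eq_sym esym. Qed.

Lemma compl_sphere1 v x : (x \in sphere ce 1 v) = ce v x.
Proof.
rewrite in_setD in_ball1 in_ball0.
by case: (eqVneq x v) => [->|] //=; rewrite /compl_graph eqxx.
Qed.

Lemma compl_notin_ball2 u w x :
  w \notin ball e 2 u -> x \in ball e 1 u -> ce x w.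
Proof.
rewrite in_ballS negb_or => /andP[wN1 /existsPn/(_ x)] exN x1.
rewrite x1 /= in exN; rewrite /compl_graph exN andbT.
by apply: contraNneq wN1 => <-.
Qed.

Lemma compl_ball2 u v : v \in ball ce 2 u.
Proof.
rewrite in_ballS in_ball1; case: (eqVneq v u) => [->|vNu] //=.
case euv : (e u v); last by rewrite /compl_graph eq_sym vNu euv.
have [w wN] := far u.
have uw : ce u w by apply: compl_notin_ball2 wN _; rewrite in_ball1 eqxx.
have vw : ce v w by apply: compl_notin_ball2 wN _; rewrite in_ball1 euv orbT.
by apply/orP; right; apply/existsP; exists w; rewrite in_ball1 uw orbT compl_graph_sym.
Qed.

Lemma compl_sphere2 u x : (x \in sphere ce 2 u) = e u x.
Proof.
rewrite in_setD compl_ball2 andbT in_ball1 negb_or /compl_graph.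
by case: (eqVneq x u) => [->|] /=; rewrite ?eirr ?negbK.
Qed.

Lemma compl_has_diam2 a b : e a b -> has_diam ce 2.
Proof. by move=> eab; split; [exact: compl_ball2 | exists a, b; rewrite compl_sphere2]. Qed.

Lemma compl_not_distance_regular u a b v :
  e u a -> e a b -> b != u -> ~~ e u b -> v \notin ball e 2 u ->
  ~ distance_regular ce.
Proof.
move=> eua eab bNu euNb vN [_ dr].
have ub : b \in sphere ce 1 u by rewrite compl_sphere1 /compl_graph eq_sym bNu euNb.
have uv : v \in sphere ce 1 u.
  by rewrite compl_sphere1; apply: compl_notin_ball2 vN _; rewrite in_ball1 eqxx.
have [_ _] := dr 1 u b u v ub uv.
set N := [set x | e u x].
have -> : sphere ce 1 v :&: sphere ce 2 u = N.
  apply/setP=> x; rewrite in_setI compl_sphere1 compl_sphere2 inE; apply: andb_idl => eux.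
  by rewrite compl_graph_sym; apply: compl_notin_ball2 vN _; rewrite in_ball1 eux orbT.
have /subset_leq_card : sphere ce 1 b :&: sphere ce 2 u \subset N :\ a.
  apply/subsetP=> x; rewrite in_setI compl_sphere1 compl_sphere2 !inE /compl_graph.
  case/andP=> /andP[_ ebNx] ->; rewrite andbT.
  by apply: contraNneq ebNx => ->; rewrite esym.
by move=> le_bN eq_bv; move: le_bN; rewrite eq_bv (cardsD1 a N) inE eua add1n ltnn.
Qed.

End Complement.

Theorem theorem4p1 (T : finType) (e : rel T) :
  simple_graph e ->
  highly_regular e ->
  (exists d, 3 <= d /\ has_diam e d) ->
  [/\ highly_regular (compl_graph e),
      has_diam (compl_graph e) 2
    & ~ distance_regular (compl_graph e)].
Proof.
move=> eP hr [[|d] [d_ge3 [d_all [u0 [v0 v0d]]]]]; first by [].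
have [esym eirr] := eP.
have conn : connected_graph e by move=> u v; exists d.+1.
have v0N : v0 \notin ball e 2 u0 by apply: notin_ball_sphere v0d.
have far := highly_regular_far hr v0N.
have [a [b [eua eab bNu euNb]]] := dist2_path (d_all u0 v0) v0N.
split.
- exact: highly_regular_compl.
- exact: (compl_has_diam2 esym eirr far eab).
- exact: (compl_not_distance_regular esym eirr far eua eab bNu euNb v0N).
Qed.
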